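(* Let $R$ be a ring and $n\in\{0,1,2,\dots\}\cup\{\infty\}$. Let $f:X^\bullet\to Y^\bullet$ be an $n$-quasi-isomorphism where $X^\bullet$ and $Y^\bullet$ are bounded above complexes of $n$-projective left $R$-modules. Then $f$ is a homotopy equivalence.
   Context: $R$ is an associative ring with identity; modules are left $R$-modules; $\infty+1=\infty$. For a positive integer $k$, $\mathcal{P}^{<k}$ is the class of modules $M$ admitting an exact sequence $0\to P_j\to\cdots\to P_0\to M\to 0$ with $j\le k-1$ and every $P_i$ finitely generated projective; $\mathcal{P}^{<\infty}$ is the class of modules admitting such a sequence for some finite $j$. A short exact sequence is $n$-exact if it stays exact under $\mathrm{Hom}_R(M,-)$ for all $M\in\mathcal{P}^{<n+1}$; a module $P$ is $n$-projective if $\mathrm{Hom}_R(P,-)$ preserves exactness of every $n$-exact sequence. A complex $Z^\bullet$ is $n$-exact if $\mathrm{Hom}_R(P,Z^\bullet)$ is exact for every $P\in\mathcal{P}^{<n+1}$; a cochain map is an $n$-quasi-isomorphism if its mapping cone is $n$-exact. *)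

From HB Require Import structures.
From mathcomp Require Import all_boot all_algebra.
Set Implicit Arguments. Unset Strict Implicit. Unset Printing Implicit Defensive.
Import GRing.Theory.
Local Open Scope ring_scope.

Inductive natinf := Fin of nat | Inf.
Definition natinf_succ (k : natinf) : natinf :=
  match k with Fin m => Fin m.+1 | Inf => Inf end.
(* j <= k - 1, i.e. j < k (always true for k = infinity) *)
Definition natinf_lt (j : nat) (k : natinf) : Prop :=
  match k with Fin m => (j < m)%N | Inf => True end.

Section Defs.
Variable R : pzRingType.

Definition fin_gen (M : lmodType R) : Prop :=
  exists (n : nat) (s : 'I_n -> M),
    forall x : M, exists r : 'I_n -> R, x = \sum_(i < n) r i *: s i.

Definition projective (P : lmodType R) : Prop :=
  forall (B C : lmodType R) (g : {linear B -> C}),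
    (forall c, exists b, g b = c) ->
    forall w : {linear P -> C}, exists v : {linear P -> B}, forall p, g (v p) = w p.

Definition fgproj (P : lmodType R) : Prop := fin_gen P /\ projective P.

(* exact sequence 0 -> P_j -> ... -> P_0 -> M -> 0 with P_i f.g. projective,
   encoded as an infinite sequence padded with zero modules P_i = 0 for i > j *)
Definition fgproj_resolution (j : nat) (M : lmodType R) : Prop :=
  exists (P : nat -> lmodType R) (d : forall i, {linear P i.+1 -> P i})
         (e : {linear P 0%N -> M}),
  [/\ forall i, fgproj (P i),
      forall i, (j < i)%N -> forall x : P i, x = 0,
      forall m, exists x, e x = m,
      forall x : P 0%N, e x = 0 <-> exists y, d 0%N y = x &
      forall i (x : P i.+1), d i x = 0 <-> exists y, d i.+1 y = x].

Definition Plt (k : natinf) (M : lmodType R) : Prop :=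
  exists j : nat, natinf_lt j k /\ fgproj_resolution j M.

Definition short_exact (A B C : lmodType R) (f : {linear A -> B}) (g : {linear B -> C}) :=
  [/\ injective f, forall b, g b = 0 <-> exists a, f a = b & forall c, exists b, g b = c].

Definition hom_exact (M A B C : lmodType R) (f : {linear A -> B}) (g : {linear B -> C}) :=
  [/\ forall u : {linear M -> A}, (forall m, f (u m) = 0) -> forall m, u m = 0,
      forall v : {linear M -> B},
        (forall m, g (v m) = 0) <-> exists u : {linear M -> A}, forall m, v m = f (u m) &
      forall w : {linear M -> C}, exists v : {linear M -> B}, forall m, w m = g (v m)].

Definition n_exact_ses (n : natinf) (A B C : lmodType R)
    (f : {linear A -> B}) (g : {linear B -> C}) : Prop :=
  short_exact f g /\ forall M, Plt (natinf_succ n) M -> hom_exact M f g.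

Definition n_projective (n : natinf) (P : lmodType R) : Prop :=
  forall (A B C : lmodType R) (f : {linear A -> B}) (g : {linear B -> C}),
    n_exact_ses n f g -> hom_exact P f g.

Record complex := Complex {
  cobj : int -> lmodType R;
  cdif : forall i : int, {linear cobj i -> cobj (i + 1)};
  cdif2 : forall i x, cdif (i + 1) (cdif i x) = 0 }.

Definition bounded_above (X : complex) : Prop :=
  exists N : int, forall i : int, N < i -> forall x : cobj X i, x = 0.

Definition is_cochain_map (X Y : complex) (f : forall i, {linear cobj X i -> cobj Y i}) :=
  forall i x, f (i + 1) (cdif X i x) = cdif Y i (f i x).

Definition n_exact_cplx (n : natinf) (Z : int -> lmodType R)
    (dZ : forall i, Z i -> Z (i + 1)) : Prop :=
  forall P : lmodType R, Plt (natinf_succ n) P ->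
  forall (i : int) (u : {linear P -> Z (i + 1)}),
    (forall p, dZ (i + 1) (u p) = 0) <->
    exists v : {linear P -> Z i}, forall p, u p = dZ i (v p).

Section Cone.
Variables (X Y : complex) (f : forall i, {linear cobj X i -> cobj Y i}).
Definition cone_obj (i : int) : lmodType R := (cobj X (i + 1) * cobj Y i)%type.
Definition cone_dif (i : int) (z : cone_obj i) : cone_obj (i + 1) :=
  (- cdif X (i + 1) z.1, f (i + 1) z.1 + cdif Y i z.2).
End Cone.

Definition n_quasi_iso (n : natinf) (X Y : complex)
    (f : forall i, {linear cobj X i -> cobj Y i}) : Prop :=
  is_cochain_map f /\ n_exact_cplx n (cone_dif f).

Definition homotopy_equiv (X Y : complex) (f : forall i, {linear cobj X i -> cobj Y i}) :=
  exists g : forall i, {linear cobj Y i -> cobj X i},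
  [/\ is_cochain_map g,
      exists h : forall i, {linear cobj X (i + 1) -> cobj X i},
        forall i (x : cobj X (i + 1)),
          g (i + 1) (f (i + 1) x) - x = cdif X i (h i x) + h (i + 1) (cdif X (i + 1) x) &
      exists h : forall i, {linear cobj Y (i + 1) -> cobj Y i},
        forall i (y : cobj Y (i + 1)),
          f (i + 1) (g (i + 1) y) - y = cdif Y i (h i y) + h (i + 1) (cdif Y (i + 1) y)].

End Defs.

(* The mapping cone of f is bounded above, n-exact and degreewise n-projective. Such a
   complex C is contractible: going down from the top degree, every differential d^i gets an
   inner inverse s^i (d^i s^i d^i = d^i). Given s^(i+1), the map p = 1 - s^(i+1) d^(i+1) of
   C^(i+1) lands in the cycles, so by n-exactness it factors through d^i on every module of
   P^{<n+1}. This makes 0 -> K -> C^i (+) C^(i+1) -> C^(i+1) -> 0, (a, b) |-> d a + b - p b,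
   an n-exact sequence, and lifting the identity of the n-projective C^(i+1) along it yields
   s^i with d^i s^i = p. As C is exact, h^i = s^i (1 - s^(i+1) d^(i+1)) is a contraction.
   Finally, the blocks of a contraction of the cone of f are a homotopy inverse g of f and
   homotopies g f ~ 1, f g ~ 1. *)

From HB Require Import structures.
From mathcomp Require Import all_boot all_algebra zify.
From Stdlib Require Import ClassicalEpsilon.
Set Implicit Arguments. Unset Strict Implicit.
Import GRing.Theory.
Local Open Scope ring_scope.

Definition unshift (F : int -> Type) (G : forall j, F (j + 1)) (i : int) : F i :=
  eq_rect (i - 1 + 1) F (G (i - 1)) i (subrK 1 i).
Arguments unshift : clear implicits.

Lemma unshiftE (F : int -> Type) (G : forall j, F (j + 1)) (j : int) : unshift F G (j + 1) = G j.
Proof.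
rewrite /unshift; move: (j + 1 - 1) (subrK 1 (j + 1)) => k e.
have kj : k = j by apply: (addIr 1).
by subst k; rewrite (eq_irrelevance e erefl).
Qed.

Lemma int_succ_ind (P : int -> Prop) : (forall j, P (j + 1)) -> forall i, P i.
Proof. by move=> P_succ i; rewrite -(subrK 1 i). Qed.

Section PairMap.
Variables (R : pzRingType) (U V W : lmodType R).
Variables (f : {linear U -> V}) (g : {linear U -> W}).

Definition pair_fun (x : U) : V * W := (f x, g x).

Fact pair_fun_is_linear : linear pair_fun.
Proof. by move=> a x y; rewrite /pair_fun !linearP. Qed.

HB.instance Definition _ :=
  GRing.isLinear.Build R U (V * W)%type _ pair_fun pair_fun_is_linear.

End PairMap.

Section Products.
Variables (R : pzRingType) (U V W : lmodType R).

Definition inl_lin : {linear U -> (U * V)%type} := pair_fun idfun \0.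
Definition inr_lin : {linear V -> (U * V)%type} := pair_fun \0 idfun.

Lemma linear_pair_split (L : {linear (U * V)%type -> W}) a b :
  L (a, b) = L (a, 0) + L (0, b).
Proof. by rewrite -linearD; congr (L (_, _)); rewrite ?addr0 ?add0r. Qed.

End Products.

Section ScaleMap.
Variables (R : pzRingType) (V : lmodType R) (z : V).

Definition scalev (r : R^o) : V := (r : R) *: z.

Fact scalev_is_linear : linear scalev.
Proof. by move=> a x y; rewrite /scalev scalerDl scalerA. Qed.

HB.instance Definition _ := GRing.isLinear.Build R R^o V _ scalev scalev_is_linear.

Lemma scalev1 : scalev 1 = z.
Proof. exact: scale1r. Qed.

End ScaleMap.

Section Kernel.
Variables (R : pzRingType) (U V : lmodType R) (g : {linear U -> V}).

Definition kernel_pred : pred U := fun x => g x == 0.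
Definition kernel := {x : U | kernel_pred x}.

HB.instance Definition _ := [isSub of kernel for @sval U kernel_pred].
HB.instance Definition _ := [Choice of kernel by <:].

Fact kernel_closed : subsemimod_closed kernel_pred.
Proof.
split; first split.
- by rewrite unfold_in /= linear0.
- by move=> x y; rewrite !unfold_in /= linearD => /eqP -> /eqP ->; rewrite addr0.
- by move=> a x; rewrite !unfold_in /= linearZ_LR => /eqP ->; rewrite scaler0.
Qed.

HB.instance Definition _ :=
  GRing.SubChoice_isSubLmodule.Build R U kernel_pred kernel kernel_closed.

Definition kernel_incl : {linear kernel -> U} := val.

Section Corestriction.
Variables (M : lmodType R) (v : {linear M -> U}) (gv0 : forall m, g (v m) = 0).

Definition kernel_corestr (m : M) : kernel := exist kernel_pred (v m) (introT eqP (gv0 m)).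

Fact kernel_corestr_is_linear : linear kernel_corestr.
Proof. by move=> a x y; apply: val_inj; rewrite /= linearP. Qed.

HB.instance Definition _ :=
  GRing.isLinear.Build R M kernel _ kernel_corestr kernel_corestr_is_linear.

End Corestriction.

Lemma short_exact_kernel : (forall c, exists b, g b = c) -> short_exact kernel_incl g.
Proof.
move=> g_surj; split=> //; first exact: val_inj.
move=> b; split; first by move=> /eqP gb0; exists (exist kernel_pred b gb0).
by case=> x <-; apply/eqP/(valP x).
Qed.

Lemma hom_exact_kernel (M : lmodType R) :
  (forall w : {linear M -> V}, exists v : {linear M -> U}, forall m, w m = g (v m)) ->
  hom_exact M kernel_incl g.
Proof.
move=> g_lift; split=> //.
- by move=> u u0 m; apply: val_inj; exact: u0.
- move=> v; split; first by move=> gv0; exists (kernel_corestr gv0).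
  by case=> u vu m; rewrite vu; apply/eqP/(valP (u m)).
Qed.

End Kernel.

Section ProjectiveClasses.
Variable R : pzRingType.

Definition zero_lmod : lmodType R := 'rV[R]_0.

Lemma zero_lmod_eq0 (x : zero_lmod) : x = 0.
Proof. by apply/matrixP => i []. Qed.

Lemma fgproj_zero : fgproj zero_lmod.
Proof.
split.
  by exists 0%N, (fun _ => 0) => x; exists (fun _ => 0); rewrite big_ord0; apply: zero_lmod_eq0.
by move=> B C g _ w; exists \0 => p; rewrite (zero_lmod_eq0 p) !linear0.
Qed.

Lemma fgproj_regular : fgproj R^o.
Proof.
split.
  exists 1%N, (fun _ => 1 : R^o) => x; exists (fun _ => x).
  by rewrite big_ord1; apply: esym; apply: (mulr1 (x : R)).
move=> B C g g_surj w; have [b gb] := g_surj (w 1).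
exists (scalev b) => r; rewrite linearZ_LR gb -linearZ_LR.
by congr (w _); apply: (mulr1 (r : R)).
Qed.

Lemma Plt_fgproj n (P : lmodType R) : fgproj P -> Plt (natinf_succ n) P.
Proof.
move=> P_fgproj; exists 0%N; split; first by case: n.
pose Q i : lmodType R := if i is 0%N then P else zero_lmod.
exists Q, (fun i => \0), idfun; split=> //.
- by case=> [|i]; [exact: P_fgproj | exact: fgproj_zero].
- by case=> // i _ x; apply: zero_lmod_eq0.
- by move=> m; exists m.
- by move=> x /=; split=> [->|[y <-]] //; exists 0.
- by move=> i x; split=> // _; exists 0; rewrite (zero_lmod_eq0 x) linear0.
Qed.

Definition n_lifting n (P : lmodType R) : Prop :=
  forall (A B C : lmodType R) (f : {linear A -> B}) (g : {linear B -> C}),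
    n_exact_ses n f g ->
    forall w : {linear P -> C}, exists v : {linear P -> B}, forall p, g (v p) = w p.

Lemma n_projective_lifting n P : n_projective n P -> n_lifting n P.
Proof.
move=> P_proj A B C f g fg w; have [_ _ /(_ w) [v wv]] := P_proj _ _ _ _ _ fg.
by exists v => p; rewrite wv.
Qed.

Lemma n_lifting_prod n (P Q : lmodType R) :
  n_lifting n P -> n_lifting n Q -> n_lifting n (P * Q)%type.
Proof.
move=> P_lift Q_lift A B C f g fg w.
have [v1 gv1] := P_lift _ _ _ _ _ fg (w \o inl_lin P Q).
have [v2 gv2] := Q_lift _ _ _ _ _ fg (w \o inr_lin P Q).
exists ((v1 \o fst) \+ (v2 \o snd)) => -[p q].
by rewrite [RHS]linear_pair_split /= linearD gv1 gv2.
Qed.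

End ProjectiveClasses.

Section SplitProjection.
Variables (R : pzRingType) (n : natinf) (U V : lmodType R).
Variables (d : {linear U -> V}) (p : {linear V -> V}).
Hypothesis p_d : forall u, p (d u) = d u.
Hypothesis p_factor : forall M, Plt (natinf_succ n) M ->
  forall w : {linear M -> V}, exists v : {linear M -> U}, forall m, p (w m) = d (v m).

Lemma projection_factor c : exists u, p c = d u.
Proof.
have [v pv] := p_factor (Plt_fgproj n (fgproj_regular R)) (scalev c).
by exists (v 1); rewrite -pv /= scalev1.
Qed.

Lemma projection_idem c : p (p c) = p c.
Proof. by have [u ->] := projection_factor c; rewrite p_d. Qed.

Definition split_map : {linear (U * V)%type -> V} := (d \o fst) \+ ((idfun \- p) \o snd).

Lemma split_map_lift (M : lmodType R) (w : {linear M -> V}) :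
  (exists v : {linear M -> U}, forall m, p (w m) = d (v m)) ->
  exists v : {linear M -> (U * V)%type}, forall m, w m = split_map (v m).
Proof. by case=> v pwv; exists (pair_fun v w) => m; rewrite /= -pwv addrC subrK. Qed.

Lemma split_map_n_exact : n_exact_ses n (kernel_incl split_map) split_map.
Proof.
split.
  apply: short_exact_kernel => c; have [u pcu] := projection_factor c.
  by exists (u, c); rewrite /= -pcu addrC subrK.
by move=> M M_Plt; apply: hom_exact_kernel => w; apply: split_map_lift; exact: p_factor.
Qed.

Lemma section_of_projection :
  n_lifting n V -> exists s : {linear V -> U}, forall x, d (s x) = p x.
Proof.
move=> V_lift; have [v splitv] := V_lift _ _ _ _ _ split_map_n_exact idfun.
exists (fst \o v) => x; have /= := congr1 p (splitv x).
by case: (v x) => a b /=; rewrite !linearD linearN projection_idem p_d subrr addr0.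
Qed.

End SplitProjection.

Definition has_inner_inverse (R : pzRingType) (U V : lmodType R) (d : {linear U -> V}) :=
  exists s : {linear V -> U}, forall x, d (s (d x)) = d x.

Section Contraction.
Variables (R : pzRingType) (C : complex R).
Local Notation d := (cdif C).

Definition exact_cplx : Prop :=
  forall i (z : cobj C (i + 1)), d (i + 1) z = 0 -> exists y, d i y = z.

Definition contractible : Prop :=
  exists h : forall i, {linear cobj C (i + 1) -> cobj C i},
    forall i x, d i (h i x) + h (i + 1) (d (i + 1) x) = x.

Lemma n_exact_cplx_exact n : n_exact_cplx n (fun i => d i) -> exact_cplx.
Proof.
move=> C_nexact i z dz0.
have [/(_ _)[r|v zv]] := C_nexact _ (Plt_fgproj n (fgproj_regular R)) i (scalev z).
  by rewrite /= linearZ_LR dz0 scaler0.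
by exists (v 1); rewrite -[RHS](scalev1 z) zv.
Qed.

Section InnerInverses.
Variable s : forall i, {linear cobj C (i + 1) -> cobj C i}.
Hypothesis dsd : forall i x, d i (s i (d i x)) = d i x.

Lemma inner_inverse_on_cycles : exact_cplx ->
  forall i (z : cobj C (i + 1)), d (i + 1) z = 0 -> d i (s i z) = z.
Proof. by move=> C_exact i z /C_exact [y <-]; rewrite dsd. Qed.

Lemma contractible_of_inner_inverses : exact_cplx -> contractible.
Proof.
move=> C_exact; exists (fun i => s i \o (idfun \- (s (i + 1) \o d (i + 1)))) => i x /=.
rewrite cdif2 linear0 subr0 inner_inverse_on_cycles ?subrK //.
by rewrite linearB dsd subrr.
Qed.

End InnerInverses.

Lemma inner_inverse_descent n i : n_exact_cplx n (fun i => d i) ->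
  n_lifting n (cobj C (i + 1)) -> has_inner_inverse (d (i + 1)) -> has_inner_inverse (d i).
Proof.
move=> C_nexact Ci1_lift [s' ds'd].
pose p : {linear cobj C (i + 1) -> cobj C (i + 1)} := idfun \- (s' \o d (i + 1)).
have p_d u : p (d i u) = d i u by rewrite /= cdif2 linear0 subr0.
have p_factor M (M_Plt : Plt (natinf_succ n) M) (w : {linear M -> cobj C (i + 1)}) :
    exists v : {linear M -> cobj C i}, forall m, p (w m) = d i (v m).
  by apply/(C_nexact _ M_Plt i (p \o w)) => m /=; rewrite linearB ds'd subrr.
have [s ds] := section_of_projection p_d p_factor Ci1_lift.
by exists s => x; rewrite ds p_d.
Qed.

Lemma bounded_above_inner_inverses n : bounded_above C ->
  n_exact_cplx n (fun i => d i) -> (forall i, n_lifting n (cobj C i)) ->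
  forall i, has_inner_inverse (d i).
Proof.
move=> [N C_bnd] C_nexact C_lift.
have top i : N <= i -> has_inner_inverse (d i).
  by move=> Ni; exists \0 => x; rewrite [RHS](C_bnd (i + 1)) ?linear0 //; lia.
have below (k : nat) : has_inner_inverse (d (N - k%:Z)).
  elim: k => [|k IHk]; first by apply: top; lia.
  apply: (inner_inverse_descent C_nexact (C_lift _)).
  by have -> : N - k.+1%:Z + 1 = N - k%:Z by lia.
move=> i; case: (boolP (N <= i)) => [/top //|iN].
by have -> : i = N - `|N - i|%N%:Z by lia.
Qed.

Lemma contractible_of_n_exact n : bounded_above C -> (forall i, n_lifting n (cobj C i)) ->
  n_exact_cplx n (fun i => d i) -> contractible.
Proof.
move=> C_bnd C_lift C_nexact.
have inv := bounded_above_inner_inverses C_bnd C_nexact C_lift.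
apply: (@contractible_of_inner_inverses
  (fun i => proj1_sig (constructive_indefinite_description _ (inv i)))).
  by move=> i; exact: proj2_sig (constructive_indefinite_description _ (inv i)).
exact: n_exact_cplx_exact C_nexact.
Qed.

End Contraction.

Section Cone.
Variables (R : pzRingType) (X Y : complex R) (f : forall i, {linear cobj X i -> cobj Y i}).

Fact cone_dif_is_linear (i : int) : linear (@cone_dif R X Y f i).
Proof.
move=> a [x y] [x' y']; rewrite /cone_dif /=.
by congr (_, _); rewrite !linearP ?opprD -?scalerN // addrACA -scalerDr.
Qed.

HB.instance Definition _ (i : int) :=
  GRing.isLinear.Build R _ _ _ (@cone_dif R X Y f i) (@cone_dif_is_linear i).

Hypothesis f_chain : is_cochain_map f.

Lemma cone_dif2 i z : cone_dif f (cone_dif f (i := i) z) = 0.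
Proof.
by case: z => x y; rewrite /cone_dif /= !linearN cdif2 f_chain linearD cdif2 addr0 addNr !linear0.
Qed.

Definition cone : complex R := Complex cone_dif2.

Lemma cone_bounded_above : bounded_above X -> bounded_above Y -> bounded_above cone.
Proof.
move=> [NX X_bnd] [NY Y_bnd]; exists (Num.max NX NY) => i Ni [x y].
by rewrite (X_bnd _ _ x) ?(Y_bnd _ _ y) //; lia.
Qed.

Section ContractedCone.
Variable h : forall i, {linear cobj cone (i + 1) -> cobj cone i}.
Hypothesis h_contr : forall i z, cdif cone i (h i z) + h (i + 1) (cdif cone (i + 1) z) = z.

Definition hinv_succ i : {linear cobj Y (i + 1) -> cobj X (i + 1)} := fst \o h i \o inr_lin _ _.
Definition homotopyX_succ i : {linear cobj X (i + 1 + 1) -> cobj X (i + 1)} :=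
  fst \o h i \o inl_lin _ _.
Definition homotopyY i : {linear cobj Y (i + 1) -> cobj Y i} := \- (snd \o h i \o inr_lin _ _).

Lemma cone_contr_fst i a b : (h i (a, b)).1 = homotopyX_succ i a + hinv_succ i b.
Proof. by rewrite linear_pair_split. Qed.

Lemma cone_contr_snd i b : (h i (0, b)).2 = - homotopyY i b.
Proof. by rewrite opprK. Qed.

Lemma hinv_f_succ i x : hinv_succ (i + 1) (f (i + 1 + 1) x) - x =
  cdif X (i + 1) (homotopyX_succ i x) + homotopyX_succ (i + 1) (cdif X (i + 1 + 1) x).
Proof.
have e := congr1 fst (@h_contr i (x, 0)).
rewrite /= /cone_dif /= !cone_contr_fst !linear0 !addr0 linearN in e.
by rewrite -[X in _ - X]e; apply/eqP; rewrite subr_eq addrACA subrr add0r addNKr.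
Qed.

Lemma hinv_chain_succ i y :
  hinv_succ (i + 1) (cdif Y (i + 1) y) = cdif X (i + 1) (hinv_succ i y).
Proof.
have e := congr1 fst (@h_contr i (0, y)).
rewrite /= /cone_dif /= !cone_contr_fst !linear0 !add0r in e.
by move/eqP: e; rewrite addr_eq0 eqr_opp => /eqP ->.
Qed.

Lemma f_hinv_succ i y :
  f (i + 1) (hinv_succ i y) - y = cdif Y i (homotopyY i y) + homotopyY (i + 1) (cdif Y (i + 1) y).
Proof.
have e := congr1 snd (@h_contr i (0, y)).
rewrite /= /cone_dif /= !linear0 !add0r cone_contr_fst !cone_contr_snd linear0 add0r in e.
by rewrite -[X in _ - X]e -addrA opprD addNKr linearN opprD !opprK.
Qed.

End ContractedCone.

Lemma homotopy_equiv_of_contractible_cone : contractible cone -> homotopy_equiv f.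
Proof.
case=> h h_contr.
exists (unshift (fun k => {linear cobj Y k -> cobj X k}) (hinv_succ h)); split.
- by apply: int_succ_ind => j y; rewrite !unshiftE; exact: hinv_chain_succ.
- exists (unshift (fun k => {linear cobj X (k + 1) -> cobj X k}) (homotopyX_succ h)).
  by apply: int_succ_ind => j x; rewrite !unshiftE; exact: hinv_f_succ.
- by exists (homotopyY h) => i y; rewrite unshiftE; exact: f_hinv_succ.
Qed.

End Cone.

Theorem proposition4p9 (R : pzRingType) (n : natinf) (X Y : complex R)
    (f : forall i, {linear cobj X i -> cobj Y i}) :
  bounded_above X -> bounded_above Y ->
  (forall i, n_projective n (cobj X i)) ->
  (forall i, n_projective n (cobj Y i)) ->
  n_quasi_iso n f ->
  homotopy_equiv f.
Proof.
move=> X_bnd Y_bnd X_proj Y_proj [f_chain f_nexact].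
apply: (homotopy_equiv_of_contractible_cone (f_chain := f_chain)).
apply: (contractible_of_n_exact (n := n)).
- exact: cone_bounded_above.
- by move=> i; apply: n_lifting_prod; exact: n_projective_lifting.
- exact: f_nexact.
Qed.
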